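(* Let $\mathcal G=\{\psi_\gamma : \gamma:[0,1]\to\mathbb R^2 \text{ piecewise } C^1\}$ be the set of diffeomorphisms of $S^1$ induced by moving the tracer point of a Prytz planimeter of length $\ell$ along arbitrary piecewise $C^1$ curves. Then $\mathcal G$ is a group under composition, and it equals $\mathcal M_0(S^1)$, the group of Möbius transformations $z\mapsto \frac{az+b}{\bar b z+\bar a}$ (with $a,b\in\mathbb C$, $|a|^2-|b|^2=1$), restricted to the unit circle $S^1=\{|z|=1\}\subset\mathbb C$; equivalently, the group of Möbius transformations preserving $S^1$ and its orientation. *)

From Stdlib Require Import Reals List.
From Coquelicot Require Import Coquelicot.
Open Scope R_scope.

(* A function R -> R is C^1 on [a,b] if it agrees there with a C^1 function
   defined on all of R (equivalent to C^1 with one-sided derivatives at ends). *)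
Definition C1_on (f : R -> R) (a b : R) : Prop :=
  exists g : R -> R,
    (forall t, ex_derive g t) /\
    (forall t, continuity_pt (Derive g) t) /\
    (forall t, a <= t <= b -> f t = g t).

Definition piecewise_C1 (gamma : R -> C) : Prop :=
  exists (n : nat) (p : nat -> R),
    p 0%nat = 0 /\ p n = 1 /\
    (forall i, (i < n)%nat -> p i < p (S i)) /\
    (forall i, (i < n)%nat ->
       C1_on (fun t => fst (gamma t)) (p i) (p (S i)) /\
       C1_on (fun t => snd (gamma t)) (p i) (p (S i))).

(* Motion of a Prytz planimeter of length l: the tracer point is gamma t, the
   rod direction (unit vector from the blade to the tracer) is u t, so the blade
   is at gamma t - l u t.  The no-slip condition (blade velocity parallel to the
   rod) is  l u' = <gamma', u^perp> u^perp  with u^perp = (-u2, u1). *)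
Definition prytz_motion (l : R) (gamma : R -> C) (u : R -> C) : Prop :=
  (forall t, 0 <= t <= 1 -> Cmod (u t) = 1) /\
  (forall t, 0 <= t <= 1 ->
     continuity_pt (fun s => fst (u s)) t /\
     continuity_pt (fun s => snd (u s)) t) /\
  exists S : list R, forall t, 0 < t < 1 -> ~ In t S ->
    exists dg1 dg2 du1 du2 : R,
      derivable_pt_lim (fun s => fst (gamma s)) t dg1 /\
      derivable_pt_lim (fun s => snd (gamma s)) t dg2 /\
      derivable_pt_lim (fun s => fst (u s)) t du1 /\
      derivable_pt_lim (fun s => snd (u s)) t du2 /\
      let w := - dg1 * snd (u t) + dg2 * fst (u t) in
      l * du1 = - snd (u t) * w /\
      l * du2 = fst (u t) * w.

(* psi_gamma maps the initial direction z to the final direction w. *)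
Definition prytz_transfer (l : R) (gamma : R -> C) (z w : C) : Prop :=
  exists u : R -> C, prytz_motion l gamma u /\ u 0 = z /\ u 1 = w.

Definition on_S1 (z : C) : Prop := Cmod z = 1.

Definition prytz_group (l : R) (f : C -> C) : Prop :=
  exists gamma : R -> C, piecewise_C1 gamma /\
    forall z, on_S1 z -> prytz_transfer l gamma z (f z).

Definition mobius_S1 (f : C -> C) : Prop :=
  exists a b : C, (Cmod a) ^ 2 - (Cmod b) ^ 2 = 1 /\
    forall z, on_S1 z ->
      f z = Cdiv (Cplus (Cmult a z) b) (Cplus (Cmult (Cconj b) z) (Cconj a)).

(* On the unit circle the no-slip condition of the planimeter is the Riccati equation
   u' = alpha - conj(alpha) u^2 with alpha = gamma' / (2 l).  Its flow is linearized by the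
   system A' = alpha B, B' = conj(alpha) A with A(0) = 1, B(0) = 0, which preserves
   |A|^2 - |B|^2; every solution satisfies u(1) = (A u(0) + conj B) / (B u(0) + conj A)
   with A, B taken at time 1, so every transfer map lies in M_0(S^1).  Conversely, a straight
   segment in direction e gives the boost a = cosh s, b = e sinh s, concatenating paths composes
   the transfer maps, and the boosts generate M_0(S^1): products of two boosts give every
   element with Re a > 1, hence all rotations, and then everything by polar decomposition.
   The group structure of the transfer maps is then inherited from M_0(S^1). *)

From Stdlib Require Import Reals List Lra Lia Psatz FunctionalExtensionality Classical.
From Coquelicot Require Import Coquelicot.
Open Scope R_scope.

Lemma dpl_eq f t d d' : derivable_pt_lim f t d -> d = d' -> derivable_pt_lim f t d'.
Proof. now intros H <-. Qed.

Lemma dpl_ext_loc f g t d a b : a < t < b -> (forall s, a < s < b -> f s = g s) ->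
  derivable_pt_lim f t d -> derivable_pt_lim g t d.
Proof.
  intros Ht E H. apply is_derive_Reals, is_derive_ext_loc with f.
  - apply locally_interval with (Finite a) (Finite b); simpl; try lra.
    intros; apply E; lra.
  - now apply is_derive_Reals.
Qed.

Lemma dpl_const c t : derivable_pt_lim (fun _ => c) t 0.
Proof. apply derivable_pt_lim_const. Qed.

Lemma dpl_plus f g t a b : derivable_pt_lim f t a -> derivable_pt_lim g t b ->
  derivable_pt_lim (fun s => f s + g s) t (a + b).
Proof. apply derivable_pt_lim_plus. Qed.

Lemma dpl_opp f t a : derivable_pt_lim f t a -> derivable_pt_lim (fun s => - f s) t (- a).
Proof. apply derivable_pt_lim_opp. Qed.

Lemma dpl_mult f g t a b : derivable_pt_lim f t a -> derivable_pt_lim g t b ->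
  derivable_pt_lim (fun s => f s * g s) t (a * g t + f t * b).
Proof. apply derivable_pt_lim_mult. Qed.

Lemma dpl_div f g t a b : derivable_pt_lim f t a -> derivable_pt_lim g t b -> g t <> 0 ->
  derivable_pt_lim (fun s => f s / g s) t ((a * g t - b * f t) / (g t * g t)).
Proof. intros; now apply derivable_pt_lim_div. Qed.

Lemma dpl_comp f g t a b : derivable_pt_lim g t a -> derivable_pt_lim f (g t) b ->
  derivable_pt_lim (fun s => f (g s)) t (b * a).
Proof. intros; now apply (derivable_pt_lim_comp g f). Qed.

Lemma dpl_affine k m t : derivable_pt_lim (fun r => k * r + m) t k.
Proof.
  eapply dpl_eq.
  - apply dpl_plus; [apply dpl_mult|]; auto using dpl_const, derivable_pt_lim_id.
  - cbv beta; ring.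
Qed.

Lemma cont_const c t : continuity_pt (fun _ => c) t.
Proof. now apply continuity_pt_const. Qed.

Lemma cont_plus f g t : continuity_pt f t -> continuity_pt g t ->
  continuity_pt (fun s => f s + g s) t.
Proof. apply continuity_pt_plus. Qed.

Lemma cont_opp f t : continuity_pt f t -> continuity_pt (fun s => - f s) t.
Proof. apply continuity_pt_opp. Qed.

Lemma cont_mult f g t : continuity_pt f t -> continuity_pt g t ->
  continuity_pt (fun s => f s * g s) t.
Proof. apply continuity_pt_mult. Qed.

Lemma cont_div f g t : continuity_pt f t -> continuity_pt g t -> g t <> 0 ->
  continuity_pt (fun s => f s / g s) t.
Proof. apply continuity_pt_div. Qed.

Lemma cont_comp f g t : continuity_pt g t -> continuity_pt f (g t) ->
  continuity_pt (fun s => f (g s)) t.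
Proof. intros; now apply (continuity_pt_comp g f). Qed.

Lemma cont_ext f g t : (forall s, f s = g s) -> continuity_pt f t -> continuity_pt g t.
Proof. intros E; now replace g with f by (apply functional_extensionality; auto). Qed.

Lemma cont_affine k m t : continuity_pt (fun r => k * r + m) t.
Proof. apply derivable_continuous_pt. exists k. apply dpl_affine. Qed.

Lemma continuity_pt_glue (F G : R -> R) c t :
  (t <= c -> continuity_pt F t) -> (c <= t -> continuity_pt G t) -> F c = G c ->
  continuity_pt (fun s => if Rle_dec s c then F s else G s) t.
Proof.
  intros HF HG E.
  destruct (Rtotal_order t c) as [Hlt|[<-|Hgt]].
  - apply continuity_pt_locally_ext with F (c - t); [lra| |apply HF; lra].
    intros y Hy. apply Rabs_def2 in Hy. destruct (Rle_dec y c); auto; lra.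
  - pose proof (HF (Rle_refl t)) as C1. pose proof (HG (Rle_refl t)) as C2.
    unfold continuity_pt, continue_in, limit1_in, limit_in in *. intros eps Heps.
    destruct (C1 eps Heps) as [d1 [Hd1 P1]], (C2 eps Heps) as [d2 [Hd2 P2]].
    exists (Rmin d1 d2). split; [now apply Rmin_pos|].
    intros x [Hx1 Hx2]. simpl in *.
    destruct (Rle_dec t t) as [_|N]; [|lra].
    destruct (Rle_dec x t).
    + apply P1. split; [exact Hx1|]. eapply Rlt_le_trans; [exact Hx2|apply Rmin_l].
    + rewrite E. apply P2. split; [exact Hx1|]. eapply Rlt_le_trans; [exact Hx2|apply Rmin_r].
  - apply continuity_pt_locally_ext with G (t - c); [lra| |apply HG; lra].
    intros y Hy. apply Rabs_def2 in Hy. destruct (Rle_dec y c); auto; lra.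
Qed.

Lemma lipschitz_continuity_pt (f : R -> R) M : 0 <= M ->
  (forall s t, Rabs (f s - f t) <= M * Rabs (s - t)) -> forall t, continuity_pt f t.
Proof.
  intros HM H t eps Heps.
  exists (eps / (M + 1)). split; [apply Rdiv_lt_0_compat; lra|].
  intros x [_ Hx]. simpl in *. unfold Rdist in *.
  eapply Rle_lt_trans; [apply H|].
  apply Rle_lt_trans with (M * (eps / (M + 1))); [apply Rmult_le_compat_l; lra|].
  apply Rlt_le_trans with ((M + 1) * (eps / (M + 1))); [|right; field; lra].
  apply Rmult_lt_compat_r; [apply Rdiv_lt_0_compat|]; lra.
Qed.

(* The exceptional points are cut out one at a time; between them MVT applies. *)
Lemma null_derivative_except (S : list R) : forall (f : R -> R) a b, a <= b ->
  (forall t, a <= t <= b -> continuity_pt f t) ->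
  (forall t, a < t < b -> ~ In t S -> derivable_pt_lim f t 0) -> f a = f b.
Proof.
  induction S as [|s S IH]; intros f a b Hab Hc Hd.
  - destruct (Req_dec a b) as [->|Hne]; auto.
    destruct (MVT_gen f a b (fun _ => 0)) as [c [_ Hc2]]; [| |lra].
    + intros x Hx. rewrite Rmin_left, Rmax_right in Hx by lra.
      apply is_derive_Reals, Hd; auto.
    + intros x Hx. rewrite Rmin_left, Rmax_right in Hx by lra. auto.
  - assert (Hd' : forall u v, a <= u -> v <= b -> (s <= u \/ v <= s) ->
              forall t, u < t < v -> ~ In t S -> derivable_pt_lim f t 0).
    { intros u v Hu Hv Hs t Ht Hn. apply Hd; [lra|]. intros [E|E]; [lra|tauto]. }
    destruct (classic (a < s < b)) as [Hs|Hs].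
    + transitivity (f s); apply IH; try lra; try (intros; apply Hc; lra);
        apply Hd'; lra.
    + apply IH; auto. intros t Ht Hn. apply Hd; auto. intros [<-|E]; tauto.
Qed.

Lemma Ceq (x y : C) : fst x = fst y -> snd x = snd y -> x = y.
Proof. destruct x, y; simpl; now intros -> ->. Qed.

Definition Cnorm2 (z : C) : R := fst z ^ 2 + snd z ^ 2.

Lemma Cnorm2_ge0 (z : C) : 0 <= Cnorm2 z.
Proof. unfold Cnorm2; nra. Qed.

Lemma Cnorm2_eq0 (z : C) : Cnorm2 z = 0 -> z = 0%C.
Proof. destruct z as [x y]; unfold Cnorm2; simpl; intro. apply Ceq; simpl; nra. Qed.

Lemma Cnorm2_neq0 (z : C) : z <> 0%C -> Cnorm2 z <> 0.
Proof. intros H E; apply H, Cnorm2_eq0, E. Qed.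

Lemma Cmod_Cnorm2 (z : C) : Cmod z ^ 2 = Cnorm2 z.
Proof. apply pow2_sqrt, Cnorm2_ge0. Qed.

Lemma on_S1_Cnorm2 (z : C) : on_S1 z <-> Cnorm2 z = 1.
Proof.
  unfold on_S1. rewrite <- Cmod_Cnorm2. split; intro H; [rewrite H; ring|].
  pose proof (Cmod_ge_0 z). nra.
Qed.

Lemma Cnorm2_mult (x y : C) : Cnorm2 (x * y)%C = Cnorm2 x * Cnorm2 y.
Proof. destruct x, y; unfold Cnorm2; simpl; ring. Qed.

Lemma Cnorm2_conj (x : C) : Cnorm2 (Cconj x) = Cnorm2 x.
Proof. destruct x; unfold Cnorm2; simpl; ring. Qed.

Lemma Cnorm2_RtoC (x : R) : Cnorm2 (RtoC x) = x * x.
Proof. unfold Cnorm2; simpl; ring. Qed.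

Lemma Cnorm2_div (x y : C) : y <> 0%C -> Cnorm2 (x / y)%C = Cnorm2 x / Cnorm2 y.
Proof.
  intro H. pose proof (Cnorm2_neq0 y H) as Hy.
  destruct x as [a b], y as [c d]; unfold Cnorm2 in *; simpl in *. field. nra.
Qed.

Lemma Cmult_conj_unit (e : C) : Cnorm2 e = 1 -> (e * Cconj e)%C = RtoC 1.
Proof. unfold Cnorm2; intro H. apply Ceq; destruct e; simpl in *; lra. Qed.

Definition Cderivable_pt_lim (f : R -> C) (t : R) (d : C) : Prop :=
  derivable_pt_lim (fun s => fst (f s)) t (fst d) /\
  derivable_pt_lim (fun s => snd (f s)) t (snd d).

Definition Ccontinuity_pt (f : R -> C) (t : R) : Prop :=
  continuity_pt (fun s => fst (f s)) t /\ continuity_pt (fun s => snd (f s)) t.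

Lemma Cdpl_eq (f : R -> C) t d d' : Cderivable_pt_lim f t d -> d = d' -> Cderivable_pt_lim f t d'.
Proof. now intros H <-. Qed.

Lemma Cdpl_const c t : Cderivable_pt_lim (fun _ => c) t 0%C.
Proof. split; apply dpl_const. Qed.

Lemma Cdpl_RtoC f t a : derivable_pt_lim f t a -> Cderivable_pt_lim (fun s => RtoC (f s)) t a.
Proof. split; simpl; auto using dpl_const. Qed.

Lemma Cdpl_plus (f g : R -> C) t a b : Cderivable_pt_lim f t a -> Cderivable_pt_lim g t b ->
  Cderivable_pt_lim (fun s => f s + g s)%C t (a + b)%C.
Proof. intros [] []; split; simpl; now apply dpl_plus. Qed.

Lemma Cdpl_minus (f g : R -> C) t a b : Cderivable_pt_lim f t a -> Cderivable_pt_lim g t b ->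
  Cderivable_pt_lim (fun s => f s - g s)%C t (a - b)%C.
Proof. intros [] []; split; simpl; apply dpl_plus; auto; now apply dpl_opp. Qed.

Lemma Cdpl_mult (f g : R -> C) t a b : Cderivable_pt_lim f t a -> Cderivable_pt_lim g t b ->
  Cderivable_pt_lim (fun s => f s * g s)%C t (a * g t + f t * b)%C.
Proof.
  intros [] []; split; simpl.
  - eapply dpl_eq; [apply dpl_plus; [|apply dpl_opp]; apply dpl_mult; eauto|]. simpl; ring.
  - eapply dpl_eq; [apply dpl_plus; apply dpl_mult; eauto|]. simpl; ring.
Qed.

Lemma Cdpl_conj (f : R -> C) t a : Cderivable_pt_lim f t a ->
  Cderivable_pt_lim (fun s => Cconj (f s)) t (Cconj a).
Proof. intros []; split; simpl; auto using dpl_opp. Qed.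

Lemma Cdpl_inv (f : R -> C) t a : f t <> 0%C -> Cderivable_pt_lim f t a ->
  Cderivable_pt_lim (fun s => / f s)%C t (- a / (f t * f t))%C.
Proof.
  intros Hn [H1 H2]. pose proof (Cnorm2_neq0 _ Hn) as Hp. unfold Cnorm2 in Hp.
  assert (Dn : derivable_pt_lim (fun s => fst (f s) ^ 2 + snd (f s) ^ 2) t
                 (2 * fst (f t) * fst a + 2 * snd (f t) * snd a)).
  { eapply dpl_eq; [apply dpl_plus; apply dpl_mult; try apply dpl_mult; eauto; apply dpl_const|].
    simpl; ring. }
  split; unfold Cinv; cbn [fst snd].
  - eapply dpl_eq; [apply dpl_div; [exact H1 | exact Dn | exact Hp]|].
    unfold Cdiv, Cinv, Cmult, Copp; destruct (f t) as [x y], a as [p q]; simpl in *.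
    field; nra.
  - eapply dpl_eq; [apply dpl_div; [apply dpl_opp, H2 | exact Dn | exact Hp]|].
    unfold Cdiv, Cinv, Cmult, Copp; destruct (f t) as [x y], a as [p q]; simpl in *.
    field; nra.
Qed.

Lemma Cdpl_div (f g : R -> C) t a b : g t <> 0%C ->
  Cderivable_pt_lim f t a -> Cderivable_pt_lim g t b ->
  Cderivable_pt_lim (fun s => f s / g s)%C t ((a * g t - f t * b) / (g t * g t))%C.
Proof.
  intros Hn Hf Hg.
  eapply Cdpl_eq; [apply Cdpl_mult; [exact Hf | apply Cdpl_inv; [exact Hn | exact Hg]]|].
  cbv beta; field; exact Hn.
Qed.

Lemma Ccont_const c t : Ccontinuity_pt (fun _ => c) t.
Proof. split; apply cont_const. Qed.

Lemma Ccont_minus (f g : R -> C) t : Ccontinuity_pt f t -> Ccontinuity_pt g t ->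
  Ccontinuity_pt (fun s => f s - g s)%C t.
Proof. intros [] []; split; simpl; apply cont_plus; auto; now apply cont_opp. Qed.

Lemma Ccont_mult (f g : R -> C) t : Ccontinuity_pt f t -> Ccontinuity_pt g t ->
  Ccontinuity_pt (fun s => f s * g s)%C t.
Proof.
  intros [] []; split; simpl; apply cont_plus; try apply cont_opp; now apply cont_mult.
Qed.

Lemma Ccont_conj (f : R -> C) t : Ccontinuity_pt f t -> Ccontinuity_pt (fun s => Cconj (f s)) t.
Proof. intros []; split; simpl; auto using cont_opp. Qed.

Lemma Ccont_div (f g : R -> C) t : g t <> 0%C -> Ccontinuity_pt f t -> Ccontinuity_pt g t ->
  Ccontinuity_pt (fun s => f s / g s)%C t.
Proof.
  intros Hn Hf [H1 H2]. apply Ccont_mult; auto.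
  pose proof (Cnorm2_neq0 _ Hn) as Hp. unfold Cnorm2 in Hp.
  assert (Cn : continuity_pt (fun s => fst (g s) ^ 2 + snd (g s) ^ 2) t).
  { apply cont_plus; simpl; repeat apply cont_mult; auto using cont_const. }
  split; simpl; apply cont_div; auto using cont_opp.
Qed.

Lemma Cnull_derivative_except (S : list R) (f : R -> C) a b : a <= b ->
  (forall t, a <= t <= b -> Ccontinuity_pt f t) ->
  (forall t, a < t < b -> ~ In t S -> Cderivable_pt_lim f t 0%C) -> f a = f b.
Proof.
  intros Hab Hc Hd.
  apply Ceq; [apply (null_derivative_except S (fun s => fst (f s)))
             |apply (null_derivative_except S (fun s => snd (f s)))];
    auto; intros; first [apply Hc | apply Hd]; auto.
Qed.

(** * The group M_0(S^1) *)

Definition su11 (a b : C) : Prop := Cnorm2 a - Cnorm2 b = 1.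

Definition mob (a b z : C) : C := ((a * z + b) / (Cconj b * z + Cconj a))%C.

Lemma mobius_S1_mob f :
  mobius_S1 f <-> exists a b, su11 a b /\ forall z, on_S1 z -> f z = mob a b z.
Proof. unfold mobius_S1, su11. now setoid_rewrite Cmod_Cnorm2. Qed.

Lemma mob_den_neq0 (a b z : C) : su11 a b -> Cnorm2 z = 1 ->
  (Cconj b * z + Cconj a)%C <> 0%C.
Proof.
  intros Hs Hz E. unfold su11, Cnorm2 in *.
  destruct a as [a1 a2], b as [b1 b2], z as [z1 z2].
  injection E; simpl; intros E2 E1.
  assert (a1 = - (b1 * z1 + b2 * z2)) by lra. assert (a2 = b1 * z2 - b2 * z1) by lra.
  simpl in *. subst. nra.
Qed.

Lemma mob_S1 (a b z : C) : su11 a b -> Cnorm2 z = 1 -> Cnorm2 (mob a b z) = 1.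
Proof.
  intros Hs Hz. pose proof (mob_den_neq0 a b z Hs Hz) as Hd.
  unfold mob. rewrite Cnorm2_div by auto.
  replace (Cnorm2 (a * z + b)%C) with (Cnorm2 (Cconj b * z + Cconj a)%C).
  - field. now apply Cnorm2_neq0.
  - unfold su11, Cnorm2 in *. destruct a as [a1 a2], b as [b1 b2], z as [z1 z2]; simpl in *.
    nra.
Qed.

Lemma su11_mul (a1 b1 a2 b2 : C) : su11 a1 b1 -> su11 a2 b2 ->
  su11 (a1 * a2 + b1 * Cconj b2)%C (a1 * b2 + b1 * Cconj a2)%C.
Proof.
  unfold su11, Cnorm2; intros H1 H2.
  destruct a1 as [p q], b1 as [r s], a2 as [x y], b2 as [u v]; simpl in *.
  transitivity ((p ^ 2 + q ^ 2 - (r ^ 2 + s ^ 2)) * (x ^ 2 + y ^ 2 - (u ^ 2 + v ^ 2))).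
  - ring.
  - simpl. rewrite H1, H2; ring.
Qed.

Lemma mob_comp (a1 b1 a2 b2 z : C) : su11 a1 b1 -> su11 a2 b2 -> Cnorm2 z = 1 ->
  mob a1 b1 (mob a2 b2 z) = mob (a1 * a2 + b1 * Cconj b2)%C (a1 * b2 + b1 * Cconj a2)%C z.
Proof.
  intros H1 H2 Hz.
  pose proof (mob_den_neq0 _ _ _ H2 Hz) as D2.
  pose proof (mob_den_neq0 _ _ _ H1 (mob_S1 _ _ _ H2 Hz)) as D1.
  pose proof (mob_den_neq0 _ _ _ (su11_mul _ _ _ _ H1 H2) Hz) as D3.
  revert D1 D3. unfold mob.
  rewrite !Cplus_conj, !Cmult_conj, !Cconj_conj. intros D1 D3.
  assert (D1' : (Cconj b1 * (a2 * z + b2) + Cconj a1 * (Cconj b2 * z + Cconj a2))%C <> 0%C).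
  { intro E. apply D1.
    replace (Cconj b1 * ((a2 * z + b2) / (Cconj b2 * z + Cconj a2)) + Cconj a1)%C with
      ((Cconj b1 * (a2 * z + b2) + Cconj a1 * (Cconj b2 * z + Cconj a2))
         / (Cconj b2 * z + Cconj a2))%C by (field; auto).
    rewrite E. field. auto. }
  field. repeat split; auto.
Qed.

Lemma mob_1_0 (z : C) : mob 1%C 0%C z = z.
Proof. unfold mob. apply Ceq; destruct z; simpl; field. Qed.

Lemma su11_inv (a b : C) : su11 a b -> su11 (Cconj a) (- b)%C.
Proof. unfold su11. rewrite Cnorm2_conj. destruct b; unfold Cnorm2; simpl. lra. Qed.

Lemma mob_invK (a b z : C) : su11 a b -> Cnorm2 z = 1 ->
  mob (Cconj a) (- b)%C (mob a b z) = z.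
Proof.
  intros H Hz. rewrite mob_comp by auto using su11_inv.
  rewrite <- (mob_1_0 z) at 2. f_equal.
  - unfold su11, Cnorm2 in H. apply Ceq; destruct a, b; simpl in *; lra.
  - apply Ceq; destruct a, b; simpl; ring.
Qed.

Lemma mob_opp (a b z : C) : su11 a b -> Cnorm2 z = 1 -> mob (- a)%C (- b)%C z = mob a b z.
Proof.
  intros H Hz. pose proof (mob_den_neq0 _ _ _ H Hz) as D.
  unfold mob in *. rewrite !Copp_conj.
  field. split; auto. intro E; apply D.
  replace (Cconj b * z + Cconj a)%C with (- (- Cconj b * z + - Cconj a))%C by ring.
  rewrite E; ring.
Qed.

(** * The Prytz equation as a Riccati equation *)

Definition prytz_ode_at (l : R) (gamma u : R -> C) (t : R) : Prop :=
  exists dg1 dg2 du1 du2 : R,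
    derivable_pt_lim (fun s => fst (gamma s)) t dg1 /\
    derivable_pt_lim (fun s => snd (gamma s)) t dg2 /\
    derivable_pt_lim (fun s => fst (u s)) t du1 /\
    derivable_pt_lim (fun s => snd (u s)) t du2 /\
    let w := - dg1 * snd (u t) + dg2 * fst (u t) in
    l * du1 = - snd (u t) * w /\
    l * du2 = fst (u t) * w.

Lemma prytz_motion_iff l gamma u : prytz_motion l gamma u <->
  (forall t, 0 <= t <= 1 -> Cnorm2 (u t) = 1) /\
  (forall t, 0 <= t <= 1 -> Ccontinuity_pt u t) /\
  exists S : list R, forall t, 0 < t < 1 -> ~ In t S -> prytz_ode_at l gamma u t.
Proof.
  unfold prytz_motion. setoid_rewrite <- on_S1_Cnorm2. reflexivity.
Qed.

Definition riccati (al u : C) : C := (al - Cconj al * u * u)%C.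

Definition prytz_coef (l : R) (dg : C) : C := (fst dg / (2 * l), snd dg / (2 * l)).

Lemma prytz_ode_at_riccati l gamma u t : 0 < l -> Cnorm2 (u t) = 1 ->
  prytz_ode_at l gamma u t <-> exists dg : C, Cderivable_pt_lim gamma t dg /\
    Cderivable_pt_lim u t (riccati (prytz_coef l dg) (u t)).
Proof.
  intros Hl. unfold prytz_ode_at, riccati, prytz_coef, Cnorm2.
  destruct (u t) as [x y]; simpl. intros Hu. split.
  - intros [dg1 [dg2 [du1 [du2 [H1 [H2 [H3 [H4 [E1 E2]]]]]]]]].
    exists (dg1, dg2). split; [now split|].
    split; simpl; [eapply dpl_eq; [exact H3|] | eapply dpl_eq; [exact H4|]];
      apply (Rmult_eq_reg_l l); try lra; [rewrite E1 | rewrite E2]; field_simplify; try lra;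
      replace (x ^ 2) with (1 - y ^ 2) by nra; field; lra.
  - intros [[dg1 dg2] [[H1 H2] [H3 H4]]]; simpl in *.
    do 4 eexists. split; [exact H1|]. split; [exact H2|]. split; [exact H3|].
    split; [exact H4|]. simpl.
    split; field_simplify; try lra; replace (x ^ 2) with (1 - y ^ 2) by nra; field; lra.
Qed.

Lemma mob_riccati (a b : R -> C) (al z : C) t :
  Cderivable_pt_lim a t (al * Cconj (b t))%C -> Cderivable_pt_lim b t (al * Cconj (a t))%C ->
  (Cconj (b t) * z + Cconj (a t))%C <> 0%C ->
  Cderivable_pt_lim (fun s => mob (a s) (b s) z) t (riccati al (mob (a t) (b t) z)).
Proof.
  intros Ha Hb Hd. unfold mob.
  eapply Cdpl_eq.
  - apply Cdpl_div; auto.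
    + apply Cdpl_plus; [apply Cdpl_mult; [exact Ha|apply Cdpl_const]|exact Hb].
    + apply Cdpl_plus; [apply Cdpl_mult; [apply Cdpl_conj, Hb|apply Cdpl_const]|].
      apply Cdpl_conj, Ha.
  - unfold riccati. rewrite !Cmult_conj, !Cconj_conj. field. auto.
Qed.

Definition is_partition (n : nat) (p : nat -> R) : Prop :=
  p 0%nat = 0 /\ p n = 1 /\ (forall i, (i < n)%nat -> p i < p (S i)).

Lemma partition_mono n p : is_partition n p -> forall i j, (i <= j <= n)%nat -> p i <= p j.
Proof.
  intros [_ [_ Hp]] i j [Hij Hjn]. induction Hij; [lra|].
  assert (p m < p (S m)) by (apply Hp; lia). specialize (IHHij ltac:(lia)). lra.
Qed.

Lemma partition_range n p : is_partition n p -> forall i, (i <= n)%nat -> 0 <= p i <= 1.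
Proof.
  intros Hp i Hi. pose proof (partition_mono n p Hp) as Hm. destruct Hp as [H0 [H1 _]].
  rewrite <- H0, <- H1 at 1. split; apply Hm; lia.
Qed.

Lemma partition_pos n p : is_partition n p -> (0 < n)%nat.
Proof. intros [H0 [H1 _]]. destruct n; [rewrite H0 in H1; lra|lia]. Qed.

Lemma partition_cover n p : is_partition n p -> forall t, 0 <= t <= 1 ->
  exists i, (i < n)%nat /\ p i <= t <= p (S i).
Proof.
  intros Hp. pose proof (partition_pos n p Hp) as Hn. destruct Hp as [H0 [H1 H2]].
  assert (K : forall k, (1 <= k <= n)%nat -> forall t, 0 <= t <= p k ->
             exists i, (i < k)%nat /\ p i <= t <= p (S i)).
  { induction k as [|k IH]; intros Hk t Ht; [lia|].
    destruct (Nat.eq_dec k 0) as [->|Hk0]; [exists 0%nat; split; [lia|lra]|].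
    destruct (Rle_dec t (p k)) as [Hle|Hgt].
    - destruct (IH ltac:(lia) t ltac:(lra)) as [i [Hi1 Hi2]]. exists i; split; [lia|auto].
    - exists k; split; [lia|lra]. }
  intros t Ht. apply (K n); [lia|lra].
Qed.

Definition piecewise_cont (n : nat) (p : nat -> R) (f : R -> R) : Prop :=
  forall i, (i < n)%nat -> exists F : R -> R,
    (forall t, p i <= t <= p (S i) -> continuity_pt F t) /\
    (forall t, p i < t < p (S i) -> f t = F t).

Lemma piecewise_cont_ex_RInt n p f : is_partition n p -> piecewise_cont n p f ->
  forall t, 0 <= t <= 1 -> ex_RInt f 0 t.
Proof.
  intros Hp Hf. pose proof (partition_mono n p Hp) as Hm. destruct Hp as [H0 [H1 H2]].
  assert (K : forall k, (k <= n)%nat -> forall t, 0 <= t <= p k -> ex_RInt f 0 t).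
  { induction k as [|k IH]; intros Hk t Ht.
    - rewrite H0 in Ht. replace t with 0 by lra. apply ex_RInt_point.
    - destruct (Rle_dec t (p k)) as [Hle|Hgt]; [apply IH; [lia|lra]|].
      apply ex_RInt_Chasles with (p k).
      + apply IH; [lia|]. split; [|lra]. rewrite <- H0; apply Hm; lia.
      + destruct (Hf k ltac:(lia)) as [F [HF1 HF2]].
        apply ex_RInt_ext with F.
        { intros x Hx. rewrite Rmin_left, Rmax_right in Hx by lra. symmetry; apply HF2; lra. }
        apply (@ex_RInt_continuous R_CompleteNormedModule). intros z Hz.
        rewrite Rmin_left, Rmax_right in Hz by lra.
        apply continuity_pt_filterlim, HF1; lra. }
  intros t Ht. apply (K n); [lia|lra].
Qed.

Lemma piecewise_cont_bounded n p f : is_partition n p -> piecewise_cont n p f ->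
  exists M, 0 <= M /\ forall t, 0 <= t <= 1 -> Rabs (f t) <= M.
Proof.
  intros Hp Hf. destruct Hp as [H0 [H1 H2]].
  assert (K : forall k, (k <= n)%nat ->
             exists M, 0 <= M /\ forall t, 0 <= t <= p k -> Rabs (f t) <= M).
  { induction k as [|k IH]; intros Hk.
    - exists (Rabs (f 0)). split; [apply Rabs_pos|].
      intros t Ht. rewrite H0 in Ht. replace t with 0 by lra. lra.
    - destruct (IH ltac:(lia)) as [M [HM0 HM]].
      destruct (Hf k ltac:(lia)) as [F [HF1 HF2]].
      destruct (continuity_ab_maj (fun x => Rabs (F x)) (p k) (p (S k))) as [Mx [HMx1 HMx2]].
      { apply Rlt_le, H2; lia. }
      { intros c Hc. apply cont_comp; [now apply HF1|apply Rcontinuity_abs]. }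
      (* f may jump at the right end point p (S k), which is accounted for separately *)
      exists (Rmax M (Rmax (Rabs (F Mx)) (Rabs (f (p (S k)))))).
      split; [apply Rle_trans with M; auto; apply Rmax_l|].
      intros t Ht.
      destruct (Rle_dec t (p k)) as [Hle|Hgt].
      + apply Rle_trans with M; [apply HM; lra|apply Rmax_l].
      + destruct (Req_dec t (p (S k))) as [->|Hne].
        * eapply Rle_trans; [|apply Rmax_r]. apply Rmax_r.
        * rewrite HF2 by lra. eapply Rle_trans; [|apply Rmax_r].
          eapply Rle_trans; [|apply Rmax_l]. apply HMx1; lra. }
  rewrite <- H1. apply (K n). lia.
Qed.

Definition clamp01 (t : R) : R := Rmax 0 (Rmin t 1).

Lemma clamp01_id t : 0 <= t <= 1 -> clamp01 t = t.
Proof. intros; unfold clamp01. rewrite Rmin_left by lra. rewrite Rmax_right; lra. Qed.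

Lemma clamp01_range t : 0 <= clamp01 t <= 1.
Proof. unfold clamp01, Rmax, Rmin. repeat destruct Rle_dec; lra. Qed.

Lemma clamp01_lipschitz s t : Rabs (clamp01 s - clamp01 t) <= Rabs (s - t).
Proof.
  unfold clamp01, Rmax, Rmin. repeat destruct Rle_dec; unfold Rabs;
    repeat destruct Rcase_abs; lra.
Qed.

Lemma RInt_lipschitz f M : 0 <= M ->
  (forall t, 0 <= t <= 1 -> ex_RInt f 0 t) -> (forall t, 0 <= t <= 1 -> Rabs (f t) <= M) ->
  forall x y, 0 <= x <= 1 -> 0 <= y <= 1 ->
    Rabs (RInt f 0 x - RInt f 0 y) <= M * Rabs (x - y).
Proof.
  intros HM Hex Hb.
  assert (L : forall x y, 0 <= y <= x -> x <= 1 ->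
             Rabs (RInt f 0 x - RInt f 0 y) <= M * Rabs (x - y)).
  { intros x y Hxy Hx.
    assert (Ey : ex_RInt f 0 y) by (apply Hex; lra).
    assert (Eyx : ex_RInt f y x)
      by (apply (@ex_RInt_Chasles_2 R_CompleteNormedModule) with 0; [lra|apply Hex; lra]).
    assert (E : RInt f 0 y + RInt f y x = RInt f 0 x)
      by exact (@RInt_Chasles R_CompleteNormedModule f 0 y x Ey Eyx).
    replace (RInt f 0 x - RInt f 0 y) with (RInt f y x) by lra.
    rewrite (Rabs_right (x - y)) by lra. rewrite Rmult_comm.
    apply abs_RInt_le_const; auto; [lra|]. intros; apply Hb; lra. }
  intros x y Hx Hy. destruct (Rle_dec y x).
  - apply L; lra.
  - rewrite Rabs_minus_sym, (Rabs_minus_sym x). apply L; lra.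
Qed.

Lemma piecewise_cont_primitive n p f : is_partition n p -> piecewise_cont n p f ->
  exists F : R -> R, (forall t, continuity_pt F t) /\ F 0 = 0 /\
    (forall t, 0 < t < 1 -> (forall i, (i <= n)%nat -> t <> p i) ->
       derivable_pt_lim F t (f t)).
Proof.
  intros Hp Hf.
  pose proof (piecewise_cont_ex_RInt n p f Hp Hf) as Hex.
  destruct (piecewise_cont_bounded n p f Hp Hf) as [M [HM0 HM]].
  exists (fun s => RInt f 0 (clamp01 s)). split; [|split].
  - apply lipschitz_continuity_pt with M; auto. intros s t.
    eapply Rle_trans; [apply (RInt_lipschitz f M); auto using clamp01_range|].
    apply Rmult_le_compat_l; auto using clamp01_lipschitz.
  - rewrite clamp01_id by lra. exact (@RInt_point R_CompleteNormedModule 0 f).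
  - intros t Ht Hnp.
    destruct (partition_cover n p Hp t ltac:(lra)) as [i [Hi [Hti Hti']]].
    assert (Hti2 : p i < t < p (S i)).
    { split; [destruct Hti | destruct Hti']; auto; exfalso;
        [apply (Hnp i) | apply (Hnp (S i))]; auto; lia. }
    pose proof (partition_range n p Hp i ltac:(lia)).
    pose proof (partition_range n p Hp (S i) ltac:(lia)).
    destruct (Hf i Hi) as [F [HF1 HF2]].
    assert (Loc : forall P : R -> Prop, (forall y, p i < y < p (S i) -> P y) -> locally t P).
    { intros P HP. apply locally_interval with (Finite (p i)) (Finite (p (S i)));
        simpl; try lra. intros; apply HP; lra. }
    apply is_derive_Reals.
    apply is_derive_ext_loc with (fun s => RInt f 0 s).
    { apply Loc. intros y Hy. rewrite clamp01_id; auto; lra. }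
    apply (is_derive_RInt f (fun s => RInt f 0 s) 0 t).
    { apply Loc. intros y Hy. apply (@RInt_correct R_CompleteNormedModule), Hex; lra. }
    apply continuous_ext_loc with F.
    { apply Loc. intros y Hy. symmetry; apply HF2; lra. }
    apply continuity_pt_filterlim, HF1; lra.
Qed.

Definition Cpiecewise_cont (n : nat) (p : nat -> R) (h : R -> C) : Prop :=
  forall i, (i < n)%nat -> exists H : R -> C,
    (forall t, p i <= t <= p (S i) -> Ccontinuity_pt H t) /\
    (forall t, p i < t < p (S i) -> h t = H t).

Lemma Cpiecewise_cont_fst n p h : Cpiecewise_cont n p h -> piecewise_cont n p (fun s => fst (h s)).
Proof.
  intros Hh i Hi. destruct (Hh i Hi) as [H [H1 H2]].
  exists (fun s => fst (H s)). split; [intros; apply H1; auto|intros t Ht; now rewrite H2].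
Qed.

Lemma Cpiecewise_cont_snd n p h : Cpiecewise_cont n p h -> piecewise_cont n p (fun s => snd (h s)).
Proof.
  intros Hh i Hi. destruct (Hh i Hi) as [H [H1 H2]].
  exists (fun s => snd (H s)). split; [intros; apply H1; auto|intros t Ht; now rewrite H2].
Qed.

(* q = exp (int_0^t h), written through the real and imaginary parts of the primitive. *)
Lemma integrating_factor n p (h : R -> C) : is_partition n p -> Cpiecewise_cont n p h ->
  exists q : R -> C, (forall t, Ccontinuity_pt q t) /\ q 0 = RtoC 1 /\
    (forall t, 0 < t < 1 -> (forall i, (i <= n)%nat -> t <> p i) ->
       Cderivable_pt_lim q t (q t * h t)%C).
Proof.
  intros Hp Hh.
  destruct (piecewise_cont_primitive n p _ Hp (Cpiecewise_cont_fst n p h Hh))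
    as [F [CF [F0 DF]]].
  destruct (piecewise_cont_primitive n p _ Hp (Cpiecewise_cont_snd n p h Hh))
    as [G [CG [G0 DG]]].
  exists (fun s => (exp (F s) * cos (G s), exp (F s) * sin (G s))). split; [|split].
  - intros t. split; simpl; apply cont_mult; apply cont_comp; auto;
      auto using derivable_continuous_pt, derivable_pt_exp, continuity_cos, continuity_sin.
  - rewrite F0, G0, exp_0, cos_0, sin_0. apply Ceq; simpl; ring.
  - intros t Ht Hnp. pose proof (DF t Ht Hnp). pose proof (DG t Ht Hnp).
    split; simpl; (eapply dpl_eq; [apply dpl_mult; apply dpl_comp; eauto|]);
      auto using derivable_pt_lim_exp, derivable_pt_lim_cos, derivable_pt_lim_sin;
      simpl; ring.
Qed.

Definition prytz_alpha (l : R) (gamma : R -> C) (t : R) : C :=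
  prytz_coef l (Derive (fun s => fst (gamma s)) t, Derive (fun s => snd (gamma s)) t).

Definition C1_pieces (gamma : R -> C) (n : nat) (p : nat -> R) : Prop :=
  forall i, (i < n)%nat ->
    C1_on (fun t => fst (gamma t)) (p i) (p (S i)) /\
    C1_on (fun t => snd (gamma t)) (p i) (p (S i)).

Lemma piecewise_C1_pieces gamma : piecewise_C1 gamma <->
  exists n p, is_partition n p /\ C1_pieces gamma n p.
Proof.
  unfold piecewise_C1, is_partition, C1_pieces. split.
  - intros [n [p [H0 [H1 [H2 H3]]]]]. now exists n, p.
  - intros [n [p [[H0 [H1 H2]] H3]]]. now exists n, p.
Qed.

Lemma prytz_alpha_piecewise_cont l gamma n p (u : R -> C) : 0 < l ->
  is_partition n p -> C1_pieces gamma n p ->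
  (forall t, 0 <= t <= 1 -> Ccontinuity_pt u t) ->
  Cpiecewise_cont n p (fun s => Cconj (prytz_alpha l gamma s) * u s)%C.
Proof.
  intros Hl Hp Hg Hu i Hi.
  destruct (Hg i Hi) as [[g1 [Hg1 [Hg1c Hg1e]]] [g2 [Hg2 [Hg2c Hg2e]]]].
  pose proof (partition_range n p Hp i ltac:(lia)).
  pose proof (partition_range n p Hp (S i) ltac:(lia)).
  exists (fun s => Cconj (prytz_coef l (Derive g1 s, Derive g2 s)) * u s)%C. split.
  - intros t Ht. apply Ccont_mult; [apply Ccont_conj|apply Hu; lra].
    split; simpl; apply cont_div; auto using cont_const; lra.
  - intros t Ht. unfold prytz_alpha. do 4 f_equal; apply Derive_ext_loc;
      apply locally_interval with (Finite (p i)) (Finite (p (S i))); simpl; try lra;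
      intros y Hy1 Hy2; [apply Hg1e|apply Hg2e]; lra.
Qed.

Lemma prytz_motion_riccati l gamma u : 0 < l -> prytz_motion l gamma u ->
  exists S : list R, forall t, 0 < t < 1 -> ~ In t S ->
    Cderivable_pt_lim u t (riccati (prytz_alpha l gamma t) (u t)).
Proof.
  intros Hl Hm. apply prytz_motion_iff in Hm as [Hu [_ [S HS]]].
  exists S. intros t Ht Hn.
  assert (Hut : Cnorm2 (u t) = 1) by (apply Hu; lra).
  destruct (proj1 (prytz_ode_at_riccati l gamma u t Hl Hut) (HS t Ht Hn))
    as [[dg1 dg2] [[H1 H2] Du]].
  unfold prytz_alpha. simpl in H1, H2.
  rewrite (is_derive_unique _ _ dg1) by now apply is_derive_Reals.
  rewrite (is_derive_unique _ _ dg2) by now apply is_derive_Reals.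
  exact Du.
Qed.

(** * Every Prytz transfer map is a Möbius transformation *)

Definition linear_solution_at (al : C) (A B : R -> C) (t : R) : Prop :=
  Cderivable_pt_lim A t (al * B t)%C /\ Cderivable_pt_lim B t (Cconj al * A t)%C.

Lemma riccati_linear_solution_at (al : C) (u q : R -> C) t :
  Cderivable_pt_lim u t (riccati al (u t)) ->
  Cderivable_pt_lim q t (q t * (Cconj al * u t))%C ->
  linear_solution_at al (fun s => u s * q s)%C q t.
Proof.
  intros Du Dq. split.
  - eapply Cdpl_eq; [apply Cdpl_mult; eauto|]. unfold riccati. ring.
  - eapply Cdpl_eq; [exact Dq|]. ring.
Qed.

Lemma linear_solution_at_half_diff (al : C) (A1 B1 A2 B2 : R -> C) t :
  linear_solution_at al A1 B1 t -> linear_solution_at al A2 B2 t ->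
  linear_solution_at al (fun s => (A1 s - A2 s) / 2)%C (fun s => (B1 s - B2 s) / 2)%C t.
Proof.
  assert (N2 : RtoC 2 <> 0%C) by (intro E; injection E; lra).
  intros [DA1 DB1] [DA2 DB2].
  split; (eapply Cdpl_eq; [apply Cdpl_div; auto; [apply Cdpl_minus; eauto|apply Cdpl_const]|]);
    cbv beta; field; exact N2.
Qed.

Lemma linear_solution_at_conserved (al : C) (A B : R -> C) t : linear_solution_at al A B t ->
  Cderivable_pt_lim (fun s => A s * Cconj (A s) - B s * Cconj (B s))%C t 0%C.
Proof.
  intros [DA DB]. eapply Cdpl_eq.
  - apply Cdpl_minus; apply Cdpl_mult; eauto; apply Cdpl_conj; eauto.
  - rewrite !Cmult_conj, !Cconj_conj. ring.
Qed.

(* The linear system acts on the Riccati solutions by Möbius transformations: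
   (conj A u - conj B) / (A - B u) is a first integral. *)
Lemma linear_solution_at_first_integral (al : C) (A B u : R -> C) t :
  linear_solution_at al A B t -> Cderivable_pt_lim u t (riccati al (u t)) ->
  (A t - B t * u t)%C <> 0%C ->
  Cderivable_pt_lim (fun s => (Cconj (A s) * u s - Cconj (B s)) / (A s - B s * u s))%C t 0%C.
Proof.
  intros [DA DB] Du Dn. eapply Cdpl_eq.
  - apply Cdpl_div; auto.
    + apply Cdpl_minus; [apply Cdpl_mult; eauto|]; apply Cdpl_conj; eauto.
    + apply Cdpl_minus; eauto. apply Cdpl_mult; eauto.
  - unfold riccati. cbv beta. rewrite !Cmult_conj, !Cconj_conj. field. auto.
Qed.

Lemma mob_solve (a b u z : C) : (a - b * u)%C <> 0%C -> (b * z + Cconj a)%C <> 0%C ->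
  ((Cconj a * u - Cconj b) / (a - b * u))%C = z -> u = mob a (Cconj b) z.
Proof.
  intros D1 D2 E. unfold mob. rewrite Cconj_conj.
  assert (E' : (Cconj a * u - Cconj b)%C = (z * (a - b * u))%C) by (rewrite <- E; field; auto).
  replace (a * z + Cconj b)%C with (u * (b * z + Cconj a))%C.
  - field. auto.
  - replace (Cconj b) with (Cconj a * u - z * (a - b * u))%C by (rewrite <- E'; ring). ring.
Qed.

Section LinearSystem.

Variables (al : R -> C) (S : list R) (A B : R -> C).
Hypothesis AB_cont : forall t, 0 <= t <= 1 -> Ccontinuity_pt A t /\ Ccontinuity_pt B t.
Hypothesis AB_lin : forall t, 0 < t < 1 -> ~ In t S -> linear_solution_at (al t) A B t.
Hypothesis A0 : A 0 = RtoC 1.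
Hypothesis B0 : B 0 = RtoC 0.

Lemma linear_solution_su11 t : 0 <= t <= 1 -> su11 (A t) (B t).
Proof.
  intros Ht.
  assert (K : (A t * Cconj (A t) - B t * Cconj (B t))%C =
              (A 0 * Cconj (A 0) - B 0 * Cconj (B 0))%C).
  { symmetry. apply (Cnull_derivative_except S (fun s => A s * Cconj (A s) - B s * Cconj (B s))%C);
      try lra.
    - intros s Hs. destruct (AB_cont s ltac:(lra)).
      apply Ccont_minus; apply Ccont_mult; auto; apply Ccont_conj; auto.
    - intros s Hs HS. apply (linear_solution_at_conserved (al s)), AB_lin; auto; lra. }
  rewrite A0, B0 in K. apply (f_equal fst) in K.
  unfold su11, Cnorm2. destruct (A t), (B t); simpl in *. lra.
Qed.

Lemma linear_solution_den_neq0 t (w : C) : 0 <= t <= 1 -> Cnorm2 w = 1 ->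
  (A t - B t * w)%C <> 0%C.
Proof.
  intros Ht Hw E. pose proof (linear_solution_su11 t Ht) as H. unfold su11 in H.
  replace (A t) with (B t * w)%C in H.
  - rewrite Cnorm2_mult, Hw in H. lra.
  - replace (A t) with ((A t - B t * w) + B t * w)%C by ring. rewrite E. ring.
Qed.

Lemma riccati_flow_mob (Su : list R) (u : R -> C) :
  (forall t, 0 <= t <= 1 -> Ccontinuity_pt u t /\ Cnorm2 (u t) = 1) ->
  (forall t, 0 < t < 1 -> ~ In t Su -> Cderivable_pt_lim u t (riccati (al t) (u t))) ->
  u 1 = mob (A 1) (Cconj (B 1)) (u 0).
Proof.
  intros Hu Du. assert (I1 : 0 <= 1 <= 1) by lra.
  set (phi := fun s => ((Cconj (A s) * u s - Cconj (B s)) / (A s - B s * u s))%C).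
  assert (P : phi 0 = phi 1).
  { apply (Cnull_derivative_except (S ++ Su)); try lra.
    - intros s Hs. destruct (AB_cont s Hs), (Hu s Hs).
      apply Ccont_div; [apply linear_solution_den_neq0; auto| |].
      + apply Ccont_minus; [apply Ccont_mult|]; auto; apply Ccont_conj; auto.
      + apply Ccont_minus; [|apply Ccont_mult]; auto.
    - intros s Hs HS. rewrite in_app_iff in HS.
      apply (linear_solution_at_first_integral (al s)); [apply AB_lin | apply Du |]; try tauto.
      apply linear_solution_den_neq0; [|apply Hu]; lra. }
  assert (P0 : phi 0 = u 0).
  { unfold phi. rewrite A0, B0. apply Ceq; destruct (u 0); simpl; field. }
  pose proof (linear_solution_su11 1 I1) as H1.
  apply mob_solve.
  - apply linear_solution_den_neq0; [lra|apply Hu; lra].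
  - rewrite <- (Cconj_conj (B 1)). apply mob_den_neq0; [|apply Hu; lra].
    unfold su11. now rewrite Cnorm2_conj.
  - rewrite <- P0, P. reflexivity.
Qed.

End LinearSystem.

(* A and B are half the differences of the linearizations (u q, q) of the motions
   starting at 1 and -1. *)
Lemma prytz_linear_solution l gamma n p (u1 u2 : R -> C) : 0 < l ->
  is_partition n p -> C1_pieces gamma n p ->
  prytz_motion l gamma u1 -> prytz_motion l gamma u2 -> u1 0 = RtoC 1 -> u2 0 = RtoC (-1) ->
  exists S A B, (forall t, 0 <= t <= 1 -> Ccontinuity_pt A t /\ Ccontinuity_pt B t) /\
    (forall t, 0 < t < 1 -> ~ In t S -> linear_solution_at (prytz_alpha l gamma t) A B t) /\
    A 0 = RtoC 1 /\ B 0 = RtoC 0.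
Proof.
  intros Hl Hp Hg M1 M2 U1 U2.
  destruct (prytz_motion_riccati l gamma u1 Hl M1) as [S1 R1].
  destruct (prytz_motion_riccati l gamma u2 Hl M2) as [S2 R2].
  apply prytz_motion_iff in M1 as [_ [C1 _]], M2 as [_ [C2 _]].
  destruct (integrating_factor n p _ Hp (prytz_alpha_piecewise_cont l gamma n p u1 Hl Hp Hg C1))
    as [q1 [Q1c [Q10 Q1d]]].
  destruct (integrating_factor n p _ Hp (prytz_alpha_piecewise_cont l gamma n p u2 Hl Hp Hg C2))
    as [q2 [Q2c [Q20 Q2d]]].
  assert (N2 : RtoC 2 <> 0%C) by (intro E; injection E; lra).
  exists (S1 ++ S2 ++ map p (seq 0 (S n))),
    (fun s => (u1 s * q1 s - u2 s * q2 s) / 2)%C, (fun s => (q1 s - q2 s) / 2)%C.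
  split; [|split; [|split]].
  - intros t Ht. split; apply Ccont_div; auto using Ccont_const;
      apply Ccont_minus; auto; apply Ccont_mult; auto.
  - intros t Ht HS. rewrite !in_app_iff in HS.
    assert (Hnp : forall i, (i <= n)%nat -> t <> p i).
    { intros i Hi E. apply HS. right; right. apply in_map_iff. exists i.
      split; auto. apply in_seq. lia. }
    apply linear_solution_at_half_diff; apply riccati_linear_solution_at;
      first [apply R1 | apply R2 | apply Q1d | apply Q2d]; tauto.
  - rewrite U1, U2, Q10, Q20. apply Ceq; simpl; field.
  - rewrite Q10, Q20. apply Ceq; simpl; field.
Qed.

Lemma prytz_group_mobius l f : 0 < l -> prytz_group l f -> mobius_S1 f.
Proof.
  intros Hl [gamma [Hg Hf]]. apply piecewise_C1_pieces in Hg as [n [p [Hp Hpc]]].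
  assert (S1p : on_S1 (RtoC 1)) by (apply on_S1_Cnorm2; unfold Cnorm2; simpl; ring).
  assert (S1m : on_S1 (RtoC (-1))) by (apply on_S1_Cnorm2; unfold Cnorm2; simpl; ring).
  destruct (Hf _ S1p) as [u1 [M1 [U10 _]]], (Hf _ S1m) as [u2 [M2 [U20 _]]].
  destruct (prytz_linear_solution l gamma n p u1 u2 Hl Hp Hpc M1 M2 U10 U20)
    as [S [A [B [HC [HL [A0 B0]]]]]].
  apply mobius_S1_mob. exists (A 1), (Cconj (B 1)). split.
  - unfold su11. rewrite Cnorm2_conj.
    apply (linear_solution_su11 (prytz_alpha l gamma) S); auto; lra.
  - intros z Hz. destruct (Hf z Hz) as [u [Mu [<- <-]]].
    destruct (prytz_motion_riccati l gamma u Hl Mu) as [Su Ru].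
    apply prytz_motion_iff in Mu as [Nu [Cu _]].
    apply (riccati_flow_mob _ S _ _ HC HL A0 B0 Su); auto.
Qed.

(** * Concatenation of paths *)

Lemma C1_on_ext f f' a b : (forall t, a <= t <= b -> f t = f' t) -> C1_on f a b -> C1_on f' a b.
Proof.
  intros E [g [H1 [H2 H3]]]. exists g. split; auto. split; auto.
  intros t Ht. rewrite <- E; auto.
Qed.

Lemma C1_on_affine h a b k m c a' b' : C1_on h a b ->
  (forall t, a' <= t <= b' -> a <= k * t + m <= b) ->
  C1_on (fun t => h (k * t + m) + c) a' b'.
Proof.
  intros [g [H1 [H2 H3]]] Hr.
  assert (D : forall t, derivable_pt_lim (fun r => g (k * r + m) + c) t (Derive g (k * t + m) * k)).
  { intros t. eapply dpl_eq.
    - apply dpl_plus; [apply dpl_comp|apply dpl_const];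
        [apply dpl_affine | apply is_derive_Reals, Derive_correct, H1].
    - ring. }
  exists (fun t => g (k * t + m) + c). split; [|split].
  - intros t. exists (Derive g (k * t + m) * k). apply is_derive_Reals, D.
  - intros t. apply cont_ext with (fun r => Derive g (k * r + m) * k).
    + intros r. symmetry. apply is_derive_unique, is_derive_Reals, D.
    + apply cont_mult; [apply cont_comp; [apply cont_affine|apply H2]|apply cont_const].
  - intros t Ht. rewrite H3; auto.
Qed.

Definition path_join (f g : R -> C) (t : R) : C :=
  if Rle_dec t (1/2) then f (2 * t) else g (2 * t - 1).

(* The second path is translated so that the concatenation is continuous. *)
Definition path_cat (gg gf : R -> C) : R -> C :=
  path_join gg (fun s => Cplus (gf s) (Cminus (gg 1) (gf 0))).

Lemma continuity_pt_join (f g : R -> R) t : 0 <= t <= 1 ->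
  (forall s, 0 <= s <= 1 -> continuity_pt f s) -> (forall s, 0 <= s <= 1 -> continuity_pt g s) ->
  f 1 = g 0 -> continuity_pt (fun s => if Rle_dec s (1/2) then f (2 * s) else g (2 * s - 1)) t.
Proof.
  intros Ht Hf Hg J. apply continuity_pt_glue.
  - intros. apply cont_comp; [|apply Hf; lra].
    apply (cont_ext (fun r => 2 * r + 0)); [intros; ring|apply cont_affine].
  - intros. apply cont_comp; [|apply Hg; lra].
    apply (cont_ext (fun r => 2 * r + -1)); [intros; ring|apply cont_affine].
  - replace (2 * (1/2) - 1) with 0 by field. now replace (2 * (1/2)) with 1 by field.
Qed.

Lemma Ccont_path_join (f g : R -> C) t : 0 <= t <= 1 ->
  (forall s, 0 <= s <= 1 -> Ccontinuity_pt f s) -> (forall s, 0 <= s <= 1 -> Ccontinuity_pt g s) ->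
  f 1 = g 0 -> Ccontinuity_pt (path_join f g) t.
Proof.
  intros Ht Hf Hg J. unfold path_join.
  assert (Hf1 : forall s, 0 <= s <= 1 -> continuity_pt (fun r => fst (f r)) s) by apply Hf.
  assert (Hf2 : forall s, 0 <= s <= 1 -> continuity_pt (fun r => snd (f r)) s) by apply Hf.
  assert (Hg1 : forall s, 0 <= s <= 1 -> continuity_pt (fun r => fst (g r)) s) by apply Hg.
  assert (Hg2 : forall s, 0 <= s <= 1 -> continuity_pt (fun r => snd (g r)) s) by apply Hg.
  split.
  - apply (cont_ext (fun s => if Rle_dec s (1/2) then fst (f (2 * s)) else fst (g (2 * s - 1)))).
    + intros s; now destruct Rle_dec.
    + apply (continuity_pt_join (fun r => fst (f r)) (fun r => fst (g r))); auto. now rewrite J.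
  - apply (cont_ext (fun s => if Rle_dec s (1/2) then snd (f (2 * s)) else snd (g (2 * s - 1)))).
    + intros s; now destruct Rle_dec.
    + apply (continuity_pt_join (fun r => snd (f r)) (fun r => snd (g r))); auto. now rewrite J.
Qed.

Lemma C1_on_cat_l (proj : C -> R) gg gf a b : b <= 1 ->
  C1_on (fun t => proj (gg t)) a b -> C1_on (fun t => proj (path_cat gg gf t)) (a / 2) (b / 2).
Proof.
  intros Hb Hg. apply C1_on_ext with (fun t => proj (gg (2 * t + 0)) + 0).
  - intros t Ht. unfold path_cat, path_join. destruct Rle_dec; [|lra]. now rewrite !Rplus_0_r.
  - apply (C1_on_affine (fun t => proj (gg t)) a b); auto. intros; lra.
Qed.

Lemma C1_on_cat_r (proj : C -> R) gg gf a b :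
  (forall x y, proj (x + y)%C = proj x + proj y) -> 0 <= a ->
  C1_on (fun t => proj (gf t)) a b ->
  C1_on (fun t => proj (path_cat gg gf t)) ((1 + a) / 2) ((1 + b) / 2).
Proof.
  intros Hadd Ha Hf.
  apply C1_on_ext with (fun t => proj (gf (2 * t + -1)) + proj (Cminus (gg 1) (gf 0))).
  - intros t Ht. unfold path_cat, path_join. rewrite <- Hadd.
    destruct Rle_dec; [|do 3 f_equal; ring].
    replace t with (1/2) by lra. replace (2 * (1/2) + -1) with 0 by field.
    replace (2 * (1/2)) with 1 by field. f_equal; ring.
  - apply (C1_on_affine (fun t => proj (gf t)) a b); auto. intros; lra.
Qed.

Lemma piecewise_C1_cat gg gf : piecewise_C1 gg -> piecewise_C1 gf -> piecewise_C1 (path_cat gg gf).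
Proof.
  rewrite !piecewise_C1_pieces.
  intros [ng [pg [Pg Hg]]] [nf [pf [Pf Hf]]].
  pose proof (partition_pos _ _ Pf) as Hnf.
  pose proof Pg as [Hg0 [Hg1 Hg2]]. pose proof Pf as [Hf0 [Hf1 Hf2]].
  set (p := fun i => if (i <=? ng)%nat then pg i / 2 else (1 + pf (i - ng)%nat) / 2).
  assert (PL : forall i, (i <= ng)%nat -> p i = pg i / 2).
  { intros i Hi. unfold p. apply Nat.leb_le in Hi. now rewrite Hi. }
  assert (PR : forall i, (ng <= i)%nat -> p i = (1 + pf (i - ng)%nat) / 2).
  { intros i Hi. unfold p. destruct (i <=? ng)%nat eqn:E; auto.
    apply Nat.leb_le in E. replace i with ng by lia. rewrite Nat.sub_diag, Hf0, Hg1. lra. }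
  assert (Hadd1 : forall x y : C, fst (x + y)%C = fst x + fst y) by reflexivity.
  assert (Hadd2 : forall x y : C, snd (x + y)%C = snd x + snd y) by reflexivity.
  exists (ng + nf)%nat, p. split; [split; [|split]|].
  - rewrite PL by lia. rewrite Hg0; lra.
  - rewrite PR, Nat.add_comm, Nat.add_sub, Hf1 by lia. lra.
  - intros i Hi. destruct (Nat.lt_ge_cases i ng).
    + rewrite !PL by lia. pose proof (Hg2 i ltac:(lia)). lra.
    + rewrite !PR, Nat.sub_succ_l by lia. pose proof (Hf2 (i - ng)%nat ltac:(lia)). lra.
  - intros i Hi. destruct (Nat.lt_ge_cases i ng).
    + rewrite !PL by lia. destruct (Hg i ltac:(lia)).
      pose proof (partition_range _ _ Pg (S i) ltac:(lia)).
      split; apply C1_on_cat_l; auto; lra.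
    + rewrite !PR, Nat.sub_succ_l by lia. destruct (Hf (i - ng)%nat ltac:(lia)).
      pose proof (partition_range _ _ Pf (i - ng)%nat ltac:(lia)).
      split; apply C1_on_cat_r; auto; lra.
Qed.

(* The equation is homogeneous of degree one in the time derivatives and sees the
   path only through gamma'. *)
Lemma prytz_ode_at_reparam l (gamma u gamma' u' : R -> C) k m (c : C) a b t : a < t < b ->
  (forall s, a < s < b -> gamma' s = Cplus (gamma (k * s + m)) c /\ u' s = u (k * s + m)) ->
  prytz_ode_at l gamma u (k * t + m) -> prytz_ode_at l gamma' u' t.
Proof.
  intros Ht E [dg1 [dg2 [du1 [du2 [D1 [D2 [D3 [D4 [E1 E2]]]]]]]]].
  assert (Ut : u' t = u (k * t + m)) by (apply E; lra).
  assert (Dk : forall (f : R -> R) d, derivable_pt_lim f (k * t + m) d ->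
             derivable_pt_lim (fun s => f (k * s + m)) t (d * k))
    by (intros; apply dpl_comp; auto using dpl_affine).
  exists (dg1 * k), (dg2 * k), (du1 * k), (du2 * k). simpl. rewrite Ut.
  split; [|split; [|split; [|split; [|split]]]].
  - apply (dpl_ext_loc (fun s => fst (gamma (k * s + m)) + fst c) _ t _ a b); auto.
    + intros s Hs. now rewrite (proj1 (E s Hs)).
    + eapply dpl_eq.
      * apply dpl_plus; [apply (Dk (fun s => fst (gamma s))), D1|apply dpl_const].
      * ring.
  - apply (dpl_ext_loc (fun s => snd (gamma (k * s + m)) + snd c) _ t _ a b); auto.
    + intros s Hs. now rewrite (proj1 (E s Hs)).
    + eapply dpl_eq.
      * apply dpl_plus; [apply (Dk (fun s => snd (gamma s))), D2|apply dpl_const].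
      * ring.
  - apply (dpl_ext_loc (fun s => fst (u (k * s + m))) _ t _ a b); auto.
    + intros s Hs. now rewrite (proj2 (E s Hs)).
    + apply (Dk (fun s => fst (u s))), D3.
  - apply (dpl_ext_loc (fun s => snd (u (k * s + m))) _ t _ a b); auto.
    + intros s Hs. now rewrite (proj2 (E s Hs)).
    + apply (Dk (fun s => snd (u s))), D4.
  - replace (l * (du1 * k)) with (k * (l * du1)) by ring. rewrite E1. ring.
  - replace (l * (du2 * k)) with (k * (l * du2)) by ring. rewrite E2. ring.
Qed.

Lemma prytz_motion_cat l (gg gf ug uf : R -> C) :
  prytz_motion l gg ug -> prytz_motion l gf uf -> ug 1 = uf 0 ->
  prytz_motion l (path_cat gg gf) (path_join ug uf).
Proof.
  rewrite !prytz_motion_iff.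
  intros [Ng [Cg [Sg Dg]]] [Nf [Cf [Sf Df]]] J.
  split; [|split].
  - intros t Ht. unfold path_join. destruct Rle_dec; [apply Ng|apply Nf]; lra.
  - intros t Ht. apply Ccont_path_join; auto.
  - exists (map (fun s => s / 2) Sg ++ map (fun s => (s + 1) / 2) Sf ++ (1/2 :: nil)).
    intros t Ht Hn. rewrite !in_app_iff, !in_map_iff in Hn.
    destruct (Rtotal_order t (1/2)) as [Hlt|[Heq|Hgt]].
    + apply (prytz_ode_at_reparam l gg ug _ _ 2 0 0%C (t - 1) (1/2)); [lra| |].
      * intros s Hs. unfold path_cat, path_join. destruct Rle_dec; [|lra].
        rewrite Rplus_0_r, Cplus_0_r. split; reflexivity.
      * rewrite Rplus_0_r. apply Dg; [lra|].
        intro I. apply Hn. left. exists (2 * t). split; [field|auto].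
    + exfalso. apply Hn. right; right. now left.
    + apply (prytz_ode_at_reparam l gf uf _ _ 2 (-1) (Cminus (gg 1) (gf 0)) (1/2) (t + 1));
        [lra| |].
      * intros s Hs. unfold path_cat, path_join. destruct Rle_dec; [lra|].
        replace (2 * s + -1) with (2 * s - 1) by ring. split; reflexivity.
      * replace (2 * t + -1) with (2 * t - 1) by ring. apply Df; [lra|].
        intro I. apply Hn. right; left. exists (2 * t - 1). split; [field|auto].
Qed.

Lemma prytz_group_comp l f g : prytz_group l f -> prytz_group l g ->
  prytz_group l (fun z => f (g z)).
Proof.
  intros [gf [Pf Tf]] [gg [Pg Tg]].
  exists (path_cat gg gf). split; [now apply piecewise_C1_cat|].
  intros z Hz. destruct (Tg z Hz) as [ug [Mg [Ug0 Ug1]]].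
  assert (Hgz : on_S1 (g z)) by (rewrite <- Ug1; apply (proj1 Mg); lra).
  destruct (Tf (g z) Hgz) as [uf [Mf [Uf0 Uf1]]].
  eexists. split; [apply prytz_motion_cat; eauto; congruence|].
  unfold path_join. split.
  - destruct Rle_dec; [|lra]. now rewrite Rmult_0_r.
  - destruct Rle_dec; [lra|]. now replace (2 * 1 - 1) with 1 by ring.
Qed.

(** * Straight paths give the hyperbolic boosts *)

Lemma Cdpl_continuity (f : R -> C) t d : Cderivable_pt_lim f t d -> Ccontinuity_pt f t.
Proof.
  intros [D1 D2]. split; apply derivable_continuous_pt; eexists; eauto.
Qed.

Lemma C1_on_const_derivative (g : R -> R) d a b :
  (forall t, derivable_pt_lim g t d) -> C1_on g a b.
Proof.
  intros Hg. exists g. split; [|split; [|auto]].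
  - intros t. exists d. now apply is_derive_Reals.
  - intros t. apply (cont_ext (fun _ => d)); [|apply cont_const].
    intros s. symmetry. now apply is_derive_unique, is_derive_Reals.
Qed.

Lemma Cdpl_line (v : C) t : Cderivable_pt_lim (fun r => (RtoC r * v)%C) t v.
Proof.
  eapply Cdpl_eq; [apply Cdpl_mult; [apply Cdpl_RtoC, derivable_pt_lim_id|apply Cdpl_const]|].
  apply Ceq; simpl; ring.
Qed.

Lemma piecewise_C1_line (v : C) : piecewise_C1 (fun t => (RtoC t * v)%C).
Proof.
  apply piecewise_C1_pieces. exists 1%nat, INR. split.
  - split; [reflexivity|split; [reflexivity|]]. intros i Hi.
    replace i with 0%nat by lia. simpl. lra.
  - intros i Hi.
    split; [apply (C1_on_const_derivative _ (fst v))|apply (C1_on_const_derivative _ (snd v))];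
      intros t; apply (Cdpl_line v t).
Qed.

Lemma su11_boost s (e : C) : Cnorm2 e = 1 -> su11 (RtoC (cosh s)) (RtoC (sinh s) * e)%C.
Proof.
  intro He. unfold su11. rewrite Cnorm2_mult, He, !Cnorm2_RtoC.
  unfold cosh, sinh. rewrite exp_Ropp.
  pose proof (exp_pos s). field. lra.
Qed.

(* Along the straight path t |-> 2 l s e t we have alpha = s e, and the boosts
   a = cosh (s t), b = sinh (s t) e solve a' = alpha conj b, b' = alpha conj a. *)
Lemma prytz_group_boost l s (e : C) : 0 < l -> Cnorm2 e = 1 ->
  prytz_group l (mob (RtoC (cosh s)) (RtoC (sinh s) * e)%C).
Proof.
  intros Hl He.
  set (v := (RtoC (2 * l * s) * e)%C).
  assert (Hal : prytz_coef l v = (RtoC s * e)%C).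
  { unfold prytz_coef, v. apply Ceq; simpl; field; lra. }
  exists (fun t => (RtoC t * v)%C). split; [apply piecewise_C1_line|].
  intros z Hz. apply on_S1_Cnorm2 in Hz.
  set (a := fun t => RtoC (cosh (s * t))). set (b := fun t => (RtoC (sinh (s * t)) * e)%C).
  assert (Dsc : forall t, derivable_pt_lim (fun r => s * r) t s).
  { intros t. apply (dpl_ext_loc (fun r => s * r + 0) _ _ _ (t - 1) (t + 1)); [lra| |].
    - intros; ring.
    - apply dpl_affine. }
  assert (Du : forall t, Cderivable_pt_lim (fun r => mob (a r) (b r) z) t
                          (riccati (prytz_coef l v) (mob (a t) (b t) z))).
  { intros t. apply mob_riccati.
    - eapply Cdpl_eq; [apply Cdpl_RtoC, (dpl_comp cosh); [apply Dsc|apply derivable_pt_lim_cosh]|].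
      rewrite Hal. unfold b. unfold Cnorm2 in He. destruct e as [e1 e2]; simpl in He.
      apply Ceq; simpl; [|ring].
      transitivity (sinh (s * t) * s * (e1 * (e1 * 1) + e2 * (e2 * 1))); [rewrite He|]; ring.
    - eapply Cdpl_eq.
      + apply Cdpl_mult; [apply Cdpl_RtoC, (dpl_comp sinh); [apply Dsc|]|apply Cdpl_const].
        apply derivable_pt_lim_sinh.
      + rewrite Hal. unfold a. apply Ceq; destruct e; simpl; ring.
    - apply mob_den_neq0; auto. apply su11_boost; auto. }
  exists (fun t => mob (a t) (b t) z). split; [apply prytz_motion_iff; split; [|split]|split].
  - intros t _. apply mob_S1; auto. apply su11_boost; auto.
  - intros t _. eapply Cdpl_continuity, Du.
  - exists nil. intros t Ht _. apply prytz_ode_at_riccati; auto.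
    + apply mob_S1; auto. apply su11_boost; auto.
    + exists v. split; [apply Cdpl_line|apply Du].
  - unfold a, b. rewrite Rmult_0_r, cosh_0, sinh_0, Cmult_0_l. apply mob_1_0.
  - unfold a, b. now rewrite Rmult_1_r.
Qed.

(** * The boosts generate M_0(S^1) *)

Definition prytz_mob (l : R) (a b : C) : Prop := prytz_group l (mob a b).

Lemma prytz_group_ext l f g : prytz_group l f -> (forall z, on_S1 z -> f z = g z) ->
  prytz_group l g.
Proof. intros [gam [P T]] E. exists gam. split; auto. intros z Hz. rewrite <- E; auto. Qed.

Lemma prytz_mob_mul l a1 b1 a2 b2 : su11 a1 b1 -> su11 a2 b2 ->
  prytz_mob l a1 b1 -> prytz_mob l a2 b2 ->
  prytz_mob l (a1 * a2 + b1 * Cconj b2)%C (a1 * b2 + b1 * Cconj a2)%C.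
Proof.
  intros S1 S2 R1 R2. eapply prytz_group_ext; [apply (prytz_group_comp l _ _ R1 R2)|].
  intros z Hz. apply mob_comp; auto. now apply on_S1_Cnorm2.
Qed.

Lemma prytz_mob_opp l a b : su11 a b -> prytz_mob l a b -> prytz_mob l (- a)%C (- b)%C.
Proof.
  intros S R. eapply prytz_group_ext; [apply R|].
  intros z Hz. symmetry. apply mob_opp; auto. now apply on_S1_Cnorm2.
Qed.

Lemma Cpolar (b : C) : exists r e, 0 <= r /\ r * r = Cnorm2 b /\ Cnorm2 e = 1 /\
  b = (RtoC r * e)%C.
Proof.
  set (r := sqrt (Cnorm2 b)).
  assert (Hr : r * r = Cnorm2 b) by apply sqrt_sqrt, Cnorm2_ge0.
  assert (Hr0 : 0 <= r) by apply sqrt_pos.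
  exists r. destruct (Req_dec r 0) as [Z|NZ].
  - exists (RtoC 1). repeat split; auto.
    + unfold Cnorm2; simpl; ring.
    + transitivity (RtoC 0); [apply Cnorm2_eq0; rewrite <- Hr, Z; ring|].
      apply Ceq; simpl; rewrite Z; ring.
  - exists (fst b / r, snd b / r). repeat split; auto.
    + transitivity (Cnorm2 b / (r * r)); [unfold Cnorm2; simpl; field; auto|].
      rewrite <- Hr. field. intro H; apply NZ; nra.
    + apply Ceq; simpl; field; auto.
Qed.

Lemma prytz_mob_boost l c s (e : C) : 0 < l -> 1 <= c -> 0 <= s -> c * c - s * s = 1 ->
  Cnorm2 e = 1 -> prytz_mob l (RtoC c) (RtoC s * e)%C.
Proof.
  intros Hl Hc Hs E He.
  assert (Hy : 0 < c + s) by lra.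
  assert (Hyi : exp (- ln (c + s)) = c - s).
  { rewrite exp_Ropp, exp_ln by auto. field_simplify_eq; nra. }
  set (t := ln (c + s)) in Hyi.
  assert (Ch : cosh t = c) by (unfold cosh; rewrite Hyi; unfold t; rewrite exp_ln by auto; field).
  assert (Sh : sinh t = s) by (unfold sinh; rewrite Hyi; unfold t; rewrite exp_ln by auto; field).
  rewrite <- Ch, <- Sh. now apply prytz_group_boost.
Qed.

Lemma prytz_mob_real l (a b : C) : 0 < l -> su11 a b -> snd a = 0 -> 1 <= fst a ->
  prytz_mob l a b.
Proof.
  intros Hl S Ha2 Ha1. destruct (Cpolar b) as [r [e [Hr0 [Hr [He ->]]]]].
  replace a with (RtoC (fst a)) by (destruct a; simpl in *; now subst).
  apply prytz_mob_boost; auto.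
  unfold su11 in S. rewrite Cnorm2_mult, He, Cnorm2_RtoC in S.
  unfold Cnorm2 in S. rewrite Ha2 in S. nra.
Qed.

(* A product of two boosts of the same rapidity, in the directions e1 and e2, has
   a = c^2 + s^2 e1 conj(e2), b = c s (e1 + e2); writing w = e1 conj(e2), the
   condition |a - c^2| = s^2 = c^2 - 1 determines K = c^2 = |b|^2 / (2 (Re a - 1)). *)
Lemma su11_two_boosts_cosh2 (a b : C) : su11 a b -> 1 < fst a ->
  exists K, 1 < K /\ 0 < Cnorm2 (a - RtoC 1)%C /\
    Cnorm2 (a - RtoC K)%C = (K - 1) * (K - 1) /\
    Cnorm2 b * (K - 1) = K * Cnorm2 (a - RtoC 1)%C.
Proof.
  intros S Ha. set (x := fst a - 1). assert (Hx : 0 < x) by (unfold x; lra).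
  set (Q := Cnorm2 (a - RtoC 1)%C).
  assert (HQ : 0 < Q) by (unfold Q, Cnorm2; simpl; unfold x in Hx; nra).
  assert (HB : Cnorm2 b = Q + 2 * x).
  { unfold su11, Q, x, Cnorm2 in *. destruct a as [a1 a2]; simpl in *. nra. }
  exists (Cnorm2 b / (2 * x)). repeat split; auto.
  - rewrite HB. apply Rlt_div_r; lra.
  - assert (2 * (Cnorm2 b / (2 * x)) * x = Cnorm2 b) by (field; lra).
    unfold su11, Cnorm2 in *. unfold x in *. destruct a as [a1 a2]; simpl in *. nra.
  - rewrite HB. field. lra.
Qed.

Lemma su11_two_boosts (a b : C) : su11 a b -> 1 < fst a ->
  exists c s e1 e2, 1 <= c /\ 0 <= s /\ c * c - s * s = 1 /\
    Cnorm2 e1 = 1 /\ Cnorm2 e2 = 1 /\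
    a = (RtoC c * RtoC c + (RtoC s * e1) * Cconj (RtoC s * e2))%C /\
    b = (RtoC c * (RtoC s * e2) + (RtoC s * e1) * Cconj (RtoC c))%C.
Proof.
  intros S Ha. destruct (su11_two_boosts_cosh2 a b S Ha) as [K [HK [HQ [Ha1 Hb]]]].
  set (Q := Cnorm2 (a - RtoC 1)%C) in *.
  set (c := sqrt K). set (s := sqrt (K - 1)).
  assert (Hcc : c * c = K) by (apply sqrt_sqrt; lra).
  assert (Hss : s * s = K - 1) by (apply sqrt_sqrt; lra).
  assert (Hs0 : 0 < s) by (apply sqrt_lt_R0; lra).
  assert (Hc1 : 1 <= c) by (unfold c; rewrite <- sqrt_1; apply sqrt_le_1_alt; lra).
  assert (NK1 : RtoC (K - 1) <> 0%C) by (intro E; injection E; lra).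
  set (w := ((a - RtoC K) / RtoC (K - 1))%C).
  assert (Nw : Cnorm2 w = 1).
  { unfold w. rewrite Cnorm2_div, Cnorm2_RtoC, Ha1 by auto. field. lra. }
  assert (N1w : Cnorm2 (RtoC 1 + w)%C = Q / ((K - 1) * (K - 1))).
  { replace (RtoC 1 + w)%C with ((a - RtoC 1) / RtoC (K - 1))%C
      by (unfold w; rewrite RtoC_minus in *; field; auto).
    rewrite Cnorm2_div, Cnorm2_RtoC; auto. }
  assert (Nden : (RtoC (c * s) * (RtoC 1 + w))%C <> 0%C).
  { intro E. apply (f_equal Cnorm2) in E. rewrite Cnorm2_mult, Cnorm2_RtoC, N1w in E.
    unfold Cnorm2 in E; simpl in E.
    assert (0 < (c * s) * (c * s) * (Q / ((K - 1) * (K - 1)))); [|lra].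
    apply Rmult_lt_0_compat; [nra|apply Rdiv_lt_0_compat; nra]. }
  set (e2 := (b / (RtoC (c * s) * (RtoC 1 + w)))%C).
  assert (Ne2 : Cnorm2 e2 = 1).
  { unfold e2. rewrite Cnorm2_div, Cnorm2_mult, Cnorm2_RtoC, N1w by auto.
    replace ((c * s) * (c * s)) with (K * (K - 1)) by (rewrite <- Hss, <- Hcc; ring).
    field_simplify_eq; [lra|repeat split; lra]. }
  assert (Cconj_R : forall r, Cconj (RtoC r) = RtoC r) by (intros; apply Ceq; simpl; ring).
  exists c, s, (w * e2)%C, e2. repeat split; auto; try lra.
  - rewrite Cnorm2_mult, Nw, Ne2. ring.
  - rewrite Cmult_conj, Cconj_R.
    transitivity (RtoC (c * c) + RtoC (s * s) * w * (e2 * Cconj e2))%C.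
    + rewrite Cmult_conj_unit, Hcc, Hss by auto. unfold w. field. auto.
    + rewrite !RtoC_mult. ring.
  - rewrite Cconj_R. set (D := (RtoC (c * s) * (RtoC 1 + w))%C) in *.
    transitivity (e2 * D)%C.
    + unfold e2. field. exact Nden.
    + unfold D. rewrite RtoC_mult. ring.
Qed.

Lemma prytz_mob_fst_gt1 l (a b : C) : 0 < l -> su11 a b -> 1 < fst a -> prytz_mob l a b.
Proof.
  intros Hl S Ha.
  destruct (su11_two_boosts a b S Ha) as [c [s [e1 [e2 [Hc [Hs [E [N1 [N2 [-> ->]]]]]]]]]].
  assert (B : forall e, Cnorm2 e = 1 -> su11 (RtoC c) (RtoC s * e)%C).
  { intros e He. unfold su11. rewrite Cnorm2_mult, He, !Cnorm2_RtoC. lra. }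
  apply prytz_mob_mul; auto using prytz_mob_boost.
Qed.

(* A rotation w with Re w > 0 is the hyperbolic element (w c, - w s) followed by the
   boost (c, s) undoing it, where c = 1 + 1 / Re w makes Re (w c) > 1. *)
Lemma prytz_mob_rot_pos l (w : C) : 0 < l -> Cnorm2 w = 1 -> 0 < fst w -> prytz_mob l w 0%C.
Proof.
  intros Hl Hw Hf.
  set (c := 1 + 1 / fst w).
  assert (Hc : 1 < c) by (unfold c; assert (0 < 1 / fst w) by (apply Rdiv_lt_0_compat; lra); lra).
  set (s := sqrt (c * c - 1)).
  assert (Hss : s * s = c * c - 1) by (apply sqrt_sqrt; nra).
  assert (Hs0 : 0 <= s) by apply sqrt_pos.
  assert (SH : su11 (w * RtoC c)%C (- (w * RtoC s))%C).
  { unfold su11. replace (- (w * RtoC s))%C with (w * RtoC (- s))%C by (apply Ceq; simpl; ring).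
    rewrite !Cnorm2_mult, Hw, !Cnorm2_RtoC. lra. }
  assert (SB : su11 (RtoC c) (RtoC s * RtoC 1)%C).
  { unfold su11. rewrite Cnorm2_mult, !Cnorm2_RtoC. lra. }
  assert (RH : prytz_mob l (w * RtoC c)%C (- (w * RtoC s))%C).
  { apply prytz_mob_fst_gt1; auto. simpl. rewrite Rmult_0_r, Rminus_0_r.
    replace (fst w * c) with (fst w + 1) by (unfold c; field; lra). lra. }
  assert (RB : prytz_mob l (RtoC c) (RtoC s * RtoC 1)%C).
  { apply prytz_mob_boost; auto; try lra. unfold Cnorm2; simpl; ring. }
  assert (Ea : (w * RtoC c * RtoC c + - (w * RtoC s) * Cconj (RtoC s * RtoC 1))%C = w).
  { apply Ceq; destruct w as [w1 w2]; simpl.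
    + transitivity (w1 * (c * c - s * s)); [|rewrite Hss]; ring.
    + transitivity (w2 * (c * c - s * s)); [|rewrite Hss]; ring. }
  assert (Eb : (w * RtoC c * (RtoC s * RtoC 1) + - (w * RtoC s) * Cconj (RtoC c))%C = 0%C)
    by (apply Ceq; destruct w; simpl; ring).
  pose proof (prytz_mob_mul l _ _ _ _ SH SB RH RB) as R.
  now rewrite Ea, Eb in R.
Qed.

Lemma prytz_mob_rot l (w : C) : 0 < l -> Cnorm2 w = 1 -> prytz_mob l w 0%C.
Proof.
  intros Hl Hw. destruct (Rtotal_order (fst w) 0) as [Hn|[Hz|Hp]].
  - assert (Hw' : Cnorm2 (- w)%C = 1) by (unfold Cnorm2 in *; destruct w; simpl in *; nra).
    assert (S : su11 (- w)%C 0%C) by (unfold su11; rewrite Hw'; unfold Cnorm2; simpl; ring).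
    pose proof (prytz_mob_opp l _ _ S (prytz_mob_rot_pos l (- w)%C Hl Hw' ltac:(simpl; lra))).
    rewrite Copp_0 in H. now replace (- - w)%C with w in H by ring.
  - (* w = +-i is the square of a rotation with positive real part *)
    destruct w as [w1 w2]. simpl in Hz. subst w1. unfold Cnorm2 in Hw; simpl in Hw.
    set (r := sqrt 2). assert (Hr : r * r = 2) by (apply sqrt_sqrt; lra).
    assert (Hr0 : 0 < r) by (apply sqrt_lt_R0; lra).
    set (v := (1 / r, w2 / r) : C).
    assert (Hv : Cnorm2 v = 1).
    { transitivity ((1 + w2 * w2) / (r * r)); [unfold v, Cnorm2; simpl; field; lra|].
      rewrite Hr. replace (w2 * w2) with 1 by nra. field. }
    assert (Sv : su11 v 0%C) by (unfold su11; rewrite Hv; unfold Cnorm2; simpl; ring).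
    assert (Rv : prytz_mob l v 0%C)
      by (apply prytz_mob_rot_pos; auto; unfold v; simpl; apply Rdiv_lt_0_compat; lra).
    assert (Ea : (v * v + 0 * Cconj 0)%C = (0, w2)).
    { unfold v. apply Ceq; simpl.
      - transitivity ((1 - w2 * w2) / (r * r)); [field; lra|].
        replace (w2 * w2) with 1 by nra. field; lra.
      - transitivity (2 * w2 / (r * r)); [|rewrite Hr]; field; lra. }
    assert (Eb : (v * 0 + 0 * Cconj v)%C = 0%C) by ring.
    pose proof (prytz_mob_mul l _ _ _ _ Sv Sv Rv Rv) as R.
    now rewrite Ea, Eb in R.
  - apply prytz_mob_rot_pos; auto.
Qed.

(* Polar decomposition: a = r w, and (a, b) is the rotation w after the boost (r, conj(w) b). *)
Lemma prytz_mob_su11 l (a b : C) : 0 < l -> su11 a b -> prytz_mob l a b.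
Proof.
  intros Hl S. destruct (Cpolar a) as [r [w [Hr0 [Hr [Hw Ea]]]]].
  assert (Hr1 : 1 <= r) by (unfold su11 in S; pose proof (Cnorm2_ge0 b); nra).
  assert (Sw : su11 w 0%C) by (unfold su11; rewrite Hw; unfold Cnorm2; simpl; ring).
  assert (SB : su11 (RtoC r) (Cconj w * b)%C).
  { unfold su11 in *. rewrite Cnorm2_mult, Cnorm2_conj, Hw, Cnorm2_RtoC, Hr. lra. }
  assert (RB : prytz_mob l (RtoC r) (Cconj w * b)%C) by (apply prytz_mob_real; auto; simpl; lra).
  pose proof (prytz_mob_mul l _ _ _ _ Sw SB (prytz_mob_rot l w Hl Hw) RB) as R.
  replace (w * RtoC r + 0 * Cconj (Cconj w * b))%C with a in R by (rewrite Ea; ring).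
  replace (w * (Cconj w * b) + 0 * Cconj (RtoC r))%C with b in R.
  - exact R.
  - transitivity ((w * Cconj w) * b)%C; [rewrite Cmult_conj_unit by auto|]; ring.
Qed.

Lemma mobius_prytz_group l f : 0 < l -> mobius_S1 f -> prytz_group l f.
Proof.
  intros Hl Hf. apply mobius_S1_mob in Hf as [a [b [S H]]].
  eapply prytz_group_ext; [apply (prytz_mob_su11 l a b Hl S)|].
  intros z Hz. symmetry. now apply H.
Qed.

Theorem theorem1 (l : R) (hl : 0 < l) :
  prytz_group l (fun z => z) /\
  (forall f g, prytz_group l f -> prytz_group l g ->
     prytz_group l (fun z => f (g z))) /\
  (forall f, prytz_group l f ->
     exists g, prytz_group l g /\
       forall z, on_S1 z -> on_S1 (f z) /\ on_S1 (g z) /\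
                            g (f z) = z /\ f (g z) = z) /\
  (forall f, prytz_group l f <-> mobius_S1 f).
Proof.
  split; [|split; [|split]].
  - apply mobius_prytz_group; auto. apply mobius_S1_mob. exists 1%C, 0%C. split.
    + unfold su11, Cnorm2; simpl; ring.
    + intros z _. symmetry. apply mob_1_0.
  - apply prytz_group_comp.
  - intros f Hf. apply prytz_group_mobius, mobius_S1_mob in Hf as [a [b [S H]]]; auto.
    exists (mob (Cconj a) (- b)%C). split; [now apply prytz_mob_su11, su11_inv|].
    intros z Hz. apply on_S1_Cnorm2 in Hz as Hz'. rewrite !on_S1_Cnorm2, H by auto.
    pose proof (su11_inv a b S) as S'.
    repeat split; auto using mob_S1, mob_invK.
    rewrite H by (apply on_S1_Cnorm2, mob_S1; auto).
    pose proof (mob_invK _ _ z S' Hz') as E.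
    rewrite Cconj_conj in E. now replace (- - b)%C with b in E by ring.
  - split; [apply prytz_group_mobius|apply mobius_prytz_group]; auto.
Qed.
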